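(* Let $N\in\mathbb N$. The ring $R_J(N)$ contains: (1) the Laurent polynomials $\mathbb C[\zeta^{1/N},\zeta^{-1/N},q^{1/N},q^{-1/N}]$; (2) the Fourier expansions of weakly holomorphic Jacobi forms of level $N$ (of any weight $k$ and index $m\ge0$); (3) every infinite product of the form $\prod_{j=1}^\infty\bigl(1+q^{j/N}h_j(q^{1/N},\zeta^{1/N})\bigr)$, where each $h_j\in\mathbb C[q,\zeta,\zeta^{-1}]$ is either zero or a polynomial, and there is $D>0$ with $\deg_\zeta h_j\le D$ for all $j$, where $\deg_\zeta h_j=\max\{|r|:\ \zeta^r \text{ occurs in } h_j \text{ with nonzero coefficient}\}$.
   Context: $R(N)=\mathbb C[\zeta^{1/N},\zeta^{-1/N}]((q^{1/N}))$ is the ring of formal series $f=\sum_{n,r\in\frac1N\mathbb Z}c(n,r)q^n\zeta^r$ such that for each $n$ only finitely many $r$ have $c(n,r)\ne0$ and $n$ is bounded below on $\operatorname{supp}(f)=\{(n,r): c(n,r)\neq0\}$. $R_J(N)$ is the set of $f\in R(N)$ for which there exist $a>0$, $b,c\in\mathbb R$ with $\operatorname{supp}(f)\subseteq\{(n,r): n\ge ar^2+br+c\}$. Here $q=e^{2\pi i\tau}$, $\zeta=e^{2\pi i z}$ for $(\tau,z)\in\mathcal H_1\times\mathbb C$. Let $P_{2,1}(\mathbb Z)$ be the subgroup of $\operatorname{Sp}_2(\mathbb Z)$ of matrices whose entries in positions (1,2), (3,2), (4,1), (4,2), (4,3) vanish, and $\Gamma_2(N)=\{\sigma\in\operatorname{Sp}_2(\mathbb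 Z):\sigma\equiv I_4 \bmod N\}$. For $m\in\mathbb Q_{\ge0}$ and $2k\in\mathbb Z$, a weakly holomorphic Jacobi form of weight $k$, index $m$ and level $N$ is a holomorphic $\phi:\mathcal H_1\times\mathbb C\to\mathbb C$ such that $\tilde\phi\begin{pmatrix}\tau&z\\ z&\omega\end{pmatrix}=\phi(\tau,z)e^{2\pi i m\omega}$ satisfies $\det(C\Omega+D)^{-k}\tilde\phi(\sigma\langle\Omega\rangle)=\chi(\sigma)\tilde\phi(\Omega)$ for all $\sigma=\begin{pmatrix}A&B\\C&D\end{pmatrix}\in P_{2,1}(\mathbb Z)\cap\Gamma_2(N)$ (for a fixed multiplier $\chi$ of finite order), whose Fourier expansion $\sum c(n,r)q^n\zeta^r$ has $n,r\in\frac1N\mathbb Z$ with $n$ bounded below on the support (and similarly at each cusp). *)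

From HB Require Import structures.
From mathcomp Require Import all_boot all_order all_algebra.
From mathcomp Require Import all_classical all_reals all_analysis.
From mathcomp Require Import complex Rstruct Rstruct_topology.
Import numFieldNormedType.Exports numFieldTopology.Exports.
Import Order.TTheory GRing.Theory Num.Theory ComplexField.

Set Implicit Arguments.
Unset Strict Implicit.
Unset Printing Implicit Defensive.

Local Open Scope ring_scope.
Local Open Scope classical_set_scope.
Local Open Scope complex_scope.

Notation Rr := Rdefinitions.R.
Notation C := (Rdefinitions.R[i]).

(* We store the coefficient of q^(a/N) zeta^(b/N) as  f a b  (a,b:int) *)
Definition fser := int -> int -> C.

Definition in_R (N : nat) (f : fser) : Prop :=
  (forall a : int, finite_set [set b : int | f a b != 0]) /\
  (exists a0 : int, forall a b : int, f a b != 0 -> a0 <= a).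

Definition in_RJ (N : nat) (f : fser) : Prop :=
  in_R N f /\
  exists alpha beta gamma : Rr, 0 < alpha /\
    forall a b : int, f a b != 0 ->
      alpha * (b%:~R / N%:R) ^+ 2 + beta * (b%:~R / N%:R) + gamma
        <= a%:~R / N%:R.

Definition laurent_poly (f : fser) : Prop :=
  finite_set [set p : int * int | f p.1 p.2 != 0].

Definition cexp (w : C) : C :=
  (expR (complex.Re w) * cos (complex.Im w)) +i* (expR (complex.Re w) * sin (complex.Im w)).

Definition ee (x : C) : C := cexp (2%:R * (pi : Rr)%:C * 'i * x).

(* unconditional (summable-family) convergence of a family indexed by Z^2:
   the net of finite partial sums converges to v. *)
Definition has_sum2 (u : int * int -> C) (v : C) : Prop :=
  forall eps : Rr, 0 < eps -> exists F0 : seq (int * int),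
    forall F : seq (int * int), uniq F -> {subset F0 <= F} ->
      `| \sum_(p <- F) u p - v | < eps%:C.

(* holomorphic on H_1 x C: jointly continuous and complex differentiable
   in each variable separately (Osgood). *)
Definition holo_HxC (phi : C -> C -> C) : Prop :=
  forall tau z : C, 0 < complex.Im tau ->
    {for (tau, z), continuous ((fun p : C * C => phi p.1 p.2) : C^o * C^o -> C^o)} /\
    derivable ((fun t : C => phi t z) : C^o -> C^o) tau 1 /\
    derivable ((fun w : C => phi tau w) : C^o -> C^o) z 1.

Definition fourier_exp (M : nat) (psi : C -> C -> C) (c : fser) : Prop :=
  forall tau z : C, 0 < complex.Im tau ->
    has_sum2 (fun p : int * int =>
                c p.1 p.2 * ee ((p.1%:~R * tau + p.2%:~R * z) / M%:R))
             (psi tau z).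

Definition bounded_below_n (c : fser) : Prop :=
  exists a0 : int, forall a b : int, c a b != 0 -> a0 <= a.

(* Weight convention: the weight k with 2k in Z is encoded by k2 = 2k : int,
   and w^(-k) := (sqrtC w)^(-k2) (the library's square root branch; for
   integral k this is exactly w^(-k)). *)
Definition autpow (k2 : int) (w : C) : C := (sqrtC w) ^ (- k2).

Definition H2 (Om : 'M[C]_2) : Prop :=
  Om^T = Om /\
  forall v : 'rV[Rr]_2, v != 0 ->
    0 < (v *m map_mx (@complex.Im Rr) Om *m v^T) ord0 ord0.

Definition Jmx : 'M[int]_(2 + 2) := block_mx 0 1%:M (- 1%:M) 0.

Definition Sp2Z (s : 'M[int]_(2 + 2)) : Prop := s^T *m Jmx *m s = Jmx.

(* entries (1,2),(3,2),(4,1),(4,2),(4,3) (1-indexed) vanish *)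
Definition P21 (s : 'M[int]_(2 + 2)) : Prop :=
  s (inord 0) (inord 1) = 0 /\ s (inord 2) (inord 1) = 0 /\
  s (inord 3) (inord 0) = 0 /\ s (inord 3) (inord 1) = 0 /\
  s (inord 3) (inord 2) = 0.

Definition Gamma2 (N : nat) (s : 'M[int]_(2 + 2)) : Prop :=
  forall i j : 'I_(2 + 2), (N%:Z %| s i j - (i == j)%:Z)%Z.

Definition blkA (s : 'M[int]_(2 + 2)) : 'M[C]_2 := map_mx intr (ulsubmx s).
Definition blkB (s : 'M[int]_(2 + 2)) : 'M[C]_2 := map_mx intr (ursubmx s).
Definition blkC (s : 'M[int]_(2 + 2)) : 'M[C]_2 := map_mx intr (dlsubmx s).
Definition blkD (s : 'M[int]_(2 + 2)) : 'M[C]_2 := map_mx intr (drsubmx s).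

Definition sp_act (s : 'M[int]_(2 + 2)) (Om : 'M[C]_2) : 'M[C]_2 :=
  (blkA s *m Om + blkB s) *m invmx (blkC s *m Om + blkD s).

Definition sp_j (s : 'M[int]_(2 + 2)) (Om : 'M[C]_2) : C :=
  \det (blkC s *m Om + blkD s).

Definition phi_tilde (m : rat) (phi : C -> C -> C) (Om : 'M[C]_2) : C :=
  phi (Om ord0 ord0) (Om ord0 (inord 1)) * ee (ratr m * Om (inord 1) (inord 1)).

Definition slash (k2 : int) (m : rat) (phi : C -> C -> C) (a b c d : int)
  (tau z : C) : C :=
  let j := c%:~R * tau + d%:~R in
  autpow k2 j * ee (- (ratr m * c%:~R * z ^+ 2) / j)
    * phi ((a%:~R * tau + b%:~R) / j) (z / j).

Definition jacobi_form (N : nat) (k2 : int) (m : rat)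
  (chi : 'M[int]_(2 + 2) -> C) (phi : C -> C -> C) : Prop :=
  0 <= m /\
  (exists M : nat, (0 < M)%N /\ forall s, chi s ^+ M = 1) /\
  holo_HxC phi /\
  (forall s : 'M[int]_(2 + 2), Sp2Z s -> P21 s -> Gamma2 N s ->
     forall Om : 'M[C]_2, H2 Om ->
       autpow k2 (sp_j s Om) * phi_tilde m phi (sp_act s Om)
         = chi s * phi_tilde m phi Om) /\
  (exists c : fser, fourier_exp N phi c /\ bounded_below_n c) /\
  (forall a b c d : int, a * d - b * c = 1 ->
     exists M : nat, (0 < M)%N /\
       exists cf : fser, fourier_exp M (slash k2 m phi a b c d) cf /\
                         bounded_below_n cf).

Definition fmul (f g : fser) : fser := fun a b =>
  (\sum_(p \in [set: int * int]) f p.1 p.2 * g (a - p.1) (b - p.2))%R.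

Definition fone : fser := fun a b => ((a == 0) && (b == 0))%:R.

(* h j i r = coefficient of q^i zeta^r in h_j in C[q, zeta, zeta^-1] *)
Definition hseq := nat -> nat -> int -> C.

(* the j-th factor 1 + q^(j/N) h_j(q^(1/N), zeta^(1/N)) *)
Definition hfactor (h : hseq) (j : nat) : fser := fun a b =>
  fone a b + (if (j%:Z <= a) then h j `|a - j%:Z|%N b else 0).

Fixpoint pprod (h : hseq) (J : nat) : fser :=
  match J with
  | 0 => fone
  | J'.+1 => fmul (pprod h J') (hfactor h J'.+1)
  end.

Definition is_infprod (h : hseq) (P : fser) : Prop :=
  forall a b : int, exists J0 : nat, forall J : nat, (J0 <= J)%N ->
    P a b = pprod h J a b.

Definition admissible (h : hseq) : Prop :=
  (forall j : nat, (0 < j)%N ->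
     finite_set [set p : nat * int | h j p.1 p.2 != 0]) /\
  exists D : Rr, 0 < D /\
    forall (j i : nat) (r : int), (0 < j)%N -> h j i r != 0 -> `|r|%:~R <= D.

(* Write the exponents as q^(a/N) zeta^(b/N). A Laurent polynomial has bounded support. In the partial
   products of (3) the j-th factor raises a by at least j while b moves by at
   most D, so b^2 <= 2 D^2 a on the support of every partial product, and the
   coefficient of q^(a/N) is fixed by the first |a| factors.

   For (2), Fourier expansions on H_1 x C are unique: averaging the translates
   tau + N i/M, z + N j/M against the characters of (Z/MZ)^2 isolates a single
   congruence class of exponents, hence a single coefficient when M is large.
   The Heisenberg element of P_{2,1} acting by z -> z + l tau lies in
   Gamma_2(N) when N | l, so the transformation law makes the support stable
   under (a, b) -> (a + l b + N m l^2, b + 2 N m l). As a is bounded below on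
   the support, minimising over l confines the support to a parabola. *)

From HB Require Import structures.
From mathcomp Require Import all_boot all_order all_algebra.
From mathcomp Require Import all_classical all_reals all_analysis.
From mathcomp Require Import complex Rstruct Rstruct_topology.
Import numFieldNormedType.Exports numFieldTopology.Exports.
Import Order.TTheory GRing.Theory Num.Theory ComplexField.
From mathcomp Require Import exp trigo lra ring zify.

Set Implicit Arguments.
Unset Strict Implicit.
Unset Printing Implicit Defensive.

Local Open Scope ring_scope.
Local Open Scope complex_scope.
Local Open Scope classical_set_scope.

Lemma finite_int_ball (K : nat) : finite_set [set b : int | (`|b| <= K)%N].
Proof.
apply: (sub_finite_set (B := (fun i : 'I_(K + K).+1 => i%:Z - K%:Z) @` setT)).
  move=> b /= bK; have bK' : (`|(b + K%:Z)%R| < (K + K).+1)%N by lia.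
  by exists (Ordinal bK') => //=; lia.
by apply: finite_image; apply: finite_finset.
Qed.

Lemma in_RJ_of_parabolic_support (N : nat) (f : fser) (d e g a0 : int) :
  (0 < N)%N -> 0 < d -> 0 < e ->
  (forall a b, f a b != 0 -> a0 <= a /\ d * b ^+ 2 <= e * a + g) -> in_RJ N f.
Proof.
move=> N0 d0 e0 supp; split; first split.
- move=> a; apply: sub_finite_set (finite_int_ball `|(e * a + g)%R|) => b /= fab.
  by have [_] := supp a b fab; rewrite expr2; nia.
- by exists a0 => a b /supp [].
exists (d%:~R * N%:R / e%:~R), 0, (- (g%:~R / (e%:~R * N%:R))).
have Nr : (0 : Rr) < N%:R by rewrite ltr0n.
have er : (0 : Rr) < e%:~R by rewrite ltr0z.
have dr : (0 : Rr) < d%:~R by rewrite ltr0z.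
split; first by rewrite !mulr_gt0 // invr_gt0.
move=> a b /supp [_]; rewrite expr2 -(ler_int Rr) intrD !intrM -expr2 => ab.
have -> : d%:~R * N%:R / e%:~R * ((b%:~R : Rr) / N%:R) ^+ 2 + 0 * (b%:~R / N%:R)
          - g%:~R / (e%:~R * N%:R) = (d%:~R * (b%:~R : Rr) ^+ 2 - g%:~R) / (e%:~R * N%:R).
  by field; rewrite !gt_eqF.
rewrite ler_pdivrMr ?mulr_gt0 //.
have -> : a%:~R / N%:R * (e%:~R * N%:R) = (e%:~R * a%:~R : Rr) by field; rewrite gt_eqF.
lra.
Qed.

Lemma laurent_poly_in_RJ (N : nat) (f : fser) : (0 < N)%N -> laurent_poly f -> in_RJ N f.
Proof.
move=> N0 /finite_seqP [s fs].
set M : nat := \sum_(p <- s) (`|p.1| + `|p.2|)%N.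
have bound a b : f a b != 0 -> (`|a| + `|b| <= M)%N.
  move=> fab; have : [set p : int * int | f p.1 p.2 != 0] (a, b) by [].
  by rewrite fs => ab_s; rewrite /M (big_rem _ ab_s) leq_addr.
apply: (@in_RJ_of_parabolic_support N f 1 1 (M%:Z ^+ 2 + M%:Z) (- M%:Z)) => // a b /bound.
by rewrite !expr2 => ab; split; nia.
Qed.

Lemma cexpD (x y : C) : cexp (x + y) = cexp x * cexp y.
Proof.
case: x => a b; case: y => c d; rewrite /cexp /= expRD cosD sinD.
by apply/eqP; rewrite eq_complex /=; apply/andP; split; apply/eqP; ring.
Qed.

Lemma eeD (x y : C) : ee (x + y) = ee x * ee y.
Proof. by rewrite /ee mulrDr cexpD. Qed.

Lemma eeE (a b : Rr) :
  ee (a +i* b) = (expR (- (2 * pi * b)) * cos (2 * pi * a))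
                 +i* (expR (- (2 * pi * b)) * sin (2 * pi * a)).
Proof. by rewrite /ee /cexp; congr (_ +i* _); congr (_ * _); try congr (_ _); rewrite /=; ring. Qed.

Lemma ee0 : ee 0 = 1.
Proof.
by rewrite -[0 : C]/(0 +i* 0) eeE !mulr0 oppr0 expR0 cos0 sin0 !mulr1 mulr0.
Qed.

Lemma ee1 : ee 1 = 1.
Proof.
by rewrite -[1 : C]/(1 +i* 0) eeE !mulr0 oppr0 expR0 !mul1r !mulr1 mulr_natl cos2pi sin2pi.
Qed.

Lemma eeN (x : C) : ee (- x) * ee x = 1.
Proof. by rewrite -eeD addNr ee0. Qed.

Lemma ee_neq0 (x : C) : ee x != 0.
Proof. by apply/negP => /eqP ex; have := eeN x; rewrite ex mulr0 => /eqP; rewrite eq_sym oner_eq0. Qed.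

Lemma ee_mulrn (x : C) (n : nat) : ee (x *+ n) = ee x ^+ n.
Proof. by elim: n => [|n IH]; rewrite ?mulr0n ?ee0 // mulrS eeD IH exprS. Qed.

Lemma ee_int (k : int) : ee k%:~R = 1.
Proof.
have ee_nat (n : nat) : ee n%:R = 1 by rewrite ee_mulrn ee1 expr1n.
case: k => n; first exact: ee_nat.
by have := eeN n.+1%:R; rewrite ee_nat mulr1 NegzE rmorphN.
Qed.

Lemma cos_neq1 (t : Rr) : 0 < t < pi *+ 2 -> cos t != 1.
Proof.
move=> /andP [t0 t2]; apply/eqP => ct.
have pi0 := pi_gt0 Rr.
have [tp | pt] := leP t pi.
  have : t = 0.
    apply: cos_inj; rewrite ?in_itv /= ?ct ?cos0 //.
    - by rewrite (ltW t0) tp.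
    - by rewrite lexx ltW.
  by move=> e; rewrite e ltxx in t0.
have : pi *+ 2 - t = 0.
  apply: cos_inj; rewrite ?in_itv /= ?cos0 //.
  - by apply/andP; split; rewrite mulr2n; lra.
  - by rewrite lexx ltW.
  - by rewrite cosB cos2pi sin2pi ct; ring.
by move=> e; lra.
Qed.

Lemma ee_eq1 (k : int) (M : nat) : (0 < M)%N ->
  ee (k%:~R / M%:R) = 1 -> (M%:Z %| k)%Z.
Proof.
move=> M0 ekM; apply/dvdz_mod0P/eqP/negP => r0.
have r_ge0 : 0 <= (k %% M%:Z)%Z by apply: modz_ge0; rewrite eqz_nat -lt0n.
have r_lt : (k %% M%:Z)%Z < M%:Z by apply: ltz_pmod; rewrite ltz_nat.
move: (divz_eq k M%:Z) r0 r_ge0 r_lt ekM.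
move: (k %% M%:Z)%Z (k %/ M%:Z)%Z => r q -> r0 r_ge0 r_lt.
have MC : (M%:R : C) != 0 by rewrite pnatr_eq0 -lt0n.
have -> : ((q * M%:Z + r)%:~R / M%:R : C) = q%:~R + (r%:~R / M%:R : Rr) +i* 0.
  rewrite intrD intrM mulrDl -mulrA pmulrn mulfV // mulr1 complexr0.
  by rewrite fmorph_div rmorph_int rmorph_nat.
rewrite eeD ee_int mul1r eeE mulr0 oppr0 expR0 !mul1r => -[cos1 _].
have Mr : (0 : Rr) < M%:R by rewrite ltr0n.
have rr : (0 : Rr) < r%:~R by rewrite ltr0z lt_neqAle r_ge0 andbT eq_sym; apply/negP.
have rM : (r%:~R : Rr) < M%:R by move: r_lt; rewrite -(ltr_int Rr) pmulrn.
suff : 0 < 2 * pi * (r%:~R / (M%:R : Rr)) < pi *+ 2 by move/cos_neq1; rewrite cos1 eqxx.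
have pi0 := pi_gt0 Rr.
have x0 : 0 < r%:~R / (M%:R : Rr) by apply: divr_gt0.
have x1 : r%:~R / (M%:R : Rr) < 1 by rewrite ltr_pdivrMr // mul1r.
apply/andP; split; first by apply: mulr_gt0 => //; apply: mulr_gt0.
by rewrite mulr2n; nra.
Qed.

Lemma sum_ee_roots (k : int) (M : nat) : (0 < M)%N ->
  \sum_(j < M) ee (k%:~R * j%:R / M%:R) = if (M%:Z %| k)%Z then M%:R else 0.
Proof.
move=> M0; have MC : (M%:R : C) != 0 by rewrite pnatr_eq0 -lt0n.
set w := ee (k%:~R / M%:R).
rewrite (eq_bigr (fun j : 'I_M => w ^+ j)); last first.
  by move=> j _; rewrite /w -ee_mulrn mulrAC mulr_natr.
case: ifP => kM.
  have -> : w = 1.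
    by case/dvdzP: kM => q kq; rewrite /w kq intrM pmulrn -mulrA mulfV // mulr1 ee_int.
  by rewrite (eq_bigr (fun _ => 1)) ?sumr_const ?card_ord // => j _; rewrite expr1n.
have wM : w ^+ M = 1 by rewrite /w -ee_mulrn -[_ *+ M]mulr_natr divfK // ee_int.
have w1 : w - 1 != 0.
  by rewrite subr_eq0; apply: contraFN kM => /eqP; apply: ee_eq1.
have := subrX1 w M; rewrite wM subrr => /esym/eqP.
by rewrite mulf_eq0 (negbTE w1) => /eqP.
Qed.

Lemma eq_has_sum2 (u v : int * int -> C) (x : C) : u =1 v -> has_sum2 u x -> has_sum2 v x.
Proof. by move=> /funext ->. Qed.

Lemma has_sum2D (u v : int * int -> C) (x y : C) : has_sum2 u x -> has_sum2 v y ->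
  has_sum2 (fun p => u p + v p) (x + y).
Proof.
move=> hu hv eps eps0.
have eps2 : 0 < eps / 2 by rewrite divr_gt0.
have [F1 h1] := hu _ eps2; have [F2 h2] := hv _ eps2.
exists (F1 ++ F2) => F uF sF; rewrite big_split /=.
have -> : \sum_(i <- F) u i + \sum_(i <- F) v i - (x + y)
        = (\sum_(i <- F) u i - x) + (\sum_(i <- F) v i - y) by ring.
have -> : eps%:C = (eps / 2)%:C + (eps / 2)%:C by rewrite -rmorphD /= -splitr.
apply: le_lt_trans (ler_normD _ _) _.
by apply: ltrD; [apply: h1 | apply: h2] => // p pF; apply: sF; rewrite mem_cat pF ?orbT.
Qed.

Lemma has_sum2Zl (u : int * int -> C) (x k : C) : has_sum2 u x ->
  has_sum2 (fun p => k * u p) (k * x).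
Proof.
move=> hu eps eps0.
have [r kr] : exists r : Rr, `|k| = r%:C := ex_intro _ _ (normc_def k).
have r0 : 0 <= r by rewrite -ler0c -kr.
have [F0 h0] := hu (eps / (r + 1)) (divr_gt0 eps0 (ltr_wpDl r0 ltr01)).
exists F0 => F uF sF; rewrite -mulr_sumr -mulrBr normrM kr.
apply: (le_lt_trans (y := r%:C * (eps / (r + 1))%:C)).
  by apply: ler_wpM2l; [rewrite ler0c | apply: ltW; apply: h0].
by rewrite -rmorphM ltcR /= mulrA ltr_pdivrMr ?ltr_wpDl //; nra.
Qed.

Lemma has_sum2_sum (I : Type) (r : seq I) (U : I -> int * int -> C) (X : I -> C) :
  (forall i, has_sum2 (U i) (X i)) ->
  has_sum2 (fun p => \sum_(i <- r) U i p) (\sum_(i <- r) X i).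
Proof.
move=> hU; elim: r => [|i r IH].
  move=> eps eps0; exists [::] => F _ _.
  by rewrite (eq_bigr (fun _ => 0)) => [|p _]; rewrite ?big_nil ?big1 ?subrr ?normr0 ?ltcR.
rewrite big_cons; apply: (@eq_has_sum2 (fun p => U i p + \sum_(j <- r) U j p)).
  by move=> p; rewrite big_cons.
exact: has_sum2D.
Qed.

Lemma has_sum2_tail (v : int * int -> C) (x : C) : has_sum2 v x ->
  forall eps : Rr, 0 < eps -> exists F0 : seq (int * int),
    forall G, uniq G -> (forall p, p \in G -> p \notin F0) ->
      `| \sum_(p <- G) v p | < (eps + eps)%:C.
Proof.
move=> hv eps eps0; have [F0 h0] := hv _ eps0.
exists F0 => G uG G'F0.
have u0 : uniq (undup F0) := undup_uniq F0.
have s0 : {subset F0 <= undup F0} by move=> p; rewrite mem_undup.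
have u1 : uniq (undup F0 ++ G).
  by rewrite cat_uniq u0 uG andbT /=; apply/hasPn => p /G'F0; rewrite mem_undup.
have s1 : {subset F0 <= undup F0 ++ G} by move=> p pF0; rewrite mem_cat mem_undup pF0.
have := h0 _ u1 s1; have := h0 _ u0 s0; rewrite big_cat /=.
set S0 := \sum_(i <- undup F0) v i; set SG := \sum_(i <- G) v i => h1 h2.
have -> : SG = (S0 + SG - x) - (S0 - x) by ring.
by rewrite rmorphD; apply: le_lt_trans (ler_normB _ _) _; rewrite addrC; exact: ltrD.
Qed.

Lemma has_sum2_reindex (u : int * int -> C) (x : C) (g g' : int * int -> int * int) :
  cancel g g' -> cancel g' g -> has_sum2 u x -> has_sum2 (fun p => u (g p)) x.
Proof.
move=> gK g'K hu eps eps0; have [F0 h0] := hu _ eps0.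
exists (map g' F0) => F uF sF; rewrite -(big_map g predT u); apply: h0.
  by rewrite map_inj_uniq //; apply: can_inj gK.
by move=> p pF0; rewrite -[p]g'K map_f // sF // map_f.
Qed.

Lemma normC_lt_eq0 (w : C) : (forall eps : Rr, 0 < eps -> `|w| < eps%:C) -> w = 0.
Proof.
move=> small; apply/eqP; apply: contraT => w0.
have [r wr] : exists r : Rr, `|w| = r%:C := ex_intro _ _ (normc_def w).
have r0 : 0 < r by move: (normr_gt0 w); rewrite w0 wr ltcE => /andP [].
by have := small r r0; rewrite wr ltxx.
Qed.

(** * Uniqueness of Fourier expansions *)

Definition fourier_term (c : fser) (N : nat) (tau z : C) (p : int * int) : C :=
  c p.1 p.2 * ee ((p.1%:~R * tau + p.2%:~R * z) / N%:R).

Lemma fourier_term_translate (c : fser) (N M : nat) (tau z : C) (i j : nat) p :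
  (0 < N)%N -> (0 < M)%N ->
  fourier_term c N (tau + (N%:R * i%:R / M%:R : Rr)%:C) (z + (N%:R * j%:R / M%:R : Rr)%:C) p
  = fourier_term c N tau z p * ee (p.1%:~R * i%:R / M%:R) * ee (p.2%:~R * j%:R / M%:R).
Proof.
move=> N0 M0; have NC : (N%:R : C) != 0 by rewrite pnatr_eq0 -lt0n.
have MC : (M%:R : C) != 0 by rewrite pnatr_eq0 -lt0n.
rewrite /fourier_term !fmorph_div !rmorphM /= !rmorph_nat -!mulrA -!eeD.
by congr (_ * ee _); field; rewrite MC NC.
Qed.

Lemma sum_twisted_fourier_terms (c : fser) (N M : nat) (a0 b0 : int) (tau z : C) p :
  (0 < N)%N -> (0 < M)%N ->
  \sum_(i < M) \sum_(j < M) ee ((- a0)%:~R * i%:R / M%:R) * ee ((- b0)%:~R * j%:R / M%:R)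
     * fourier_term c N (tau + (N%:R * i%:R / M%:R : Rr)%:C)
                        (z + (N%:R * j%:R / M%:R : Rr)%:C) p
  = (M%:R * M%:R) * (if (M%:Z %| p.1 - a0)%Z && (M%:Z %| p.2 - b0)%Z
                     then fourier_term c N tau z p else 0).
Proof.
move=> N0 M0; set v := fourier_term c N tau z p.
have ee_sub (k l : int) (i : nat) :
    ee ((k - l)%:~R * i%:R / M%:R) = ee (k%:~R * i%:R / M%:R) * ee ((- l)%:~R * i%:R / M%:R).
  by rewrite -eeD intrB intrN; congr ee; ring.
rewrite (eq_bigr (fun i : 'I_M => v * ee ((p.1 - a0)%:~R * i%:R / M%:R)
                   * \sum_(j < M) ee ((p.2 - b0)%:~R * j%:R / M%:R))); last first.
  move=> i _; rewrite mulr_sumr; apply: eq_bigr => j _.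
  by rewrite fourier_term_translate // !ee_sub -/v; ring.
rewrite -mulr_suml -mulr_sumr !sum_ee_roots //.
by do 2 case: ifP => _; rewrite /= ?mulr0 ?mul0r //; ring.
Qed.

Lemma has_sum2_fourier_coset (c : fser) (N M : nat) (a0 b0 : int) (tau z : C) :
  (0 < N)%N -> (0 < M)%N -> 0 < complex.Im tau -> fourier_exp N (fun _ _ => 0) c ->
  has_sum2 (fun p => if (M%:Z %| p.1 - a0)%Z && (M%:Z %| p.2 - b0)%Z
                     then fourier_term c N tau z p else 0) 0.
Proof.
move=> N0 M0 tau0 c0.
have MC : (M%:R : C) * M%:R != 0 by rewrite mulf_neq0 // pnatr_eq0 -lt0n.
pose shift (i : nat) : C := (N%:R * i%:R / M%:R : Rr)%:C.
pose U (ij : 'I_M * 'I_M) p := ee ((- a0)%:~R * ij.1%:R / M%:R)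
  * ee ((- b0)%:~R * ij.2%:R / M%:R) * fourier_term c N (tau + shift ij.1) (z + shift ij.2) p.
have hU ij : has_sum2 (U ij) ((ee ((- a0)%:~R * ij.1%:R / M%:R)
                              * ee ((- b0)%:~R * ij.2%:R / M%:R)) * 0).
  by apply: has_sum2Zl; apply: c0; move: tau0; case: (tau) => tr ti /= ; rewrite addr0.
have := has_sum2Zl ((M%:R * M%:R)^-1) (has_sum2_sum (index_enum _) hU).
rewrite big1 ?mulr0 => [|ij _]; last by rewrite mulr0.
apply: eq_has_sum2 => p.
have -> : \sum_(ij <- index_enum _) U ij p = \sum_(i < M) \sum_(j < M) U (i, j) p.
  by rewrite pair_bigA; apply: eq_bigr => -[i j] _.
by rewrite sum_twisted_fourier_terms // mulKf.
Qed.

Lemma isolated_term_small (v : int * int -> C) (S : pred (int * int)) p0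
    (F0 : seq (int * int)) (e1 e2 : Rr) :
  S p0 -> {in F0, forall p, S p -> p = p0} ->
  (forall G, uniq G -> (forall p, p \in G -> p \notin F0) -> `|\sum_(p <- G) v p| < e1%:C) ->
  0 < e2 -> has_sum2 (fun p => if S p then v p else 0) 0 -> `|v p0| < (e1 + e2)%:C.
Proof.
move=> Sp0 F0S tail e2_0 hS; have [F1 h1] := hS _ e2_0.
set F := undup (p0 :: F1).
have p0F : p0 \in F by rewrite mem_undup mem_head.
set G := [seq p <- F | S p & p != p0].
have sumF : \sum_(p <- F) (if S p then v p else 0) = v p0 + \sum_(p <- G) v p.
  rewrite (bigD1_seq _ p0F (undup_uniq _)) /= Sp0 /G big_filter; congr (_ + _).
  by rewrite big_mkcond [RHS]big_mkcond; apply: eq_bigr => p _; case: (S p); case: (p != p0).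
have G'F0 p : p \in G -> p \notin F0.
  by rewrite mem_filter => /andP [/andP [Sp /negbTE pp0] _]; apply: contraFN pp0 => /F0S ->.
have F1F : {subset F1 <= F} by move=> p pF1; rewrite mem_undup in_cons pF1 orbT.
have := h1 F (undup_uniq _) F1F; rewrite subr0 sumF => hF.
have -> : v p0 = (v p0 + \sum_(p <- G) v p) - \sum_(p <- G) v p by ring.
apply: le_lt_trans (ler_normB _ _) _; rewrite rmorphD addrC; apply: ltrD => //.
by apply: tail; rewrite ?filter_uniq ?undup_uniq.
Qed.

Lemma congr_class_sparse (F0 : seq (int * int)) (a0 b0 : int) :
  let M := (\sum_(p <- F0) (`|p.1 - a0| + `|p.2 - b0|)).+1 in
  {in F0, forall p, (M%:Z %| p.1 - a0)%Z && (M%:Z %| p.2 - b0)%Z -> p = (a0, b0)}.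
Proof.
move=> M p pF0 /andP [d1 d2].
have small_dvd (x : int) : (M%:Z %| x)%Z -> (`|x| < M)%N -> x = 0.
  move=> dx xM; apply/eqP; apply: contraLR xM => x0; rewrite -leqNgt.
  by apply: dvdn_leq; rewrite ?absz_gt0.
have pM : (`|p.1 - a0| + `|p.2 - b0| < M)%N by rewrite ltnS (big_rem _ pF0) leq_addr.
move: (small_dvd _ d1 (leq_ltn_trans (leq_addr _ _) pM)).
move: (small_dvd _ d2 (leq_ltn_trans (leq_addl _ _) pM)).
by case: p {pF0 d1 d2 pM} => x y /= /eqP; rewrite subr_eq0 => /eqP -> /eqP; rewrite subr_eq0 => /eqP ->.
Qed.

(* All but eps of the series lies on a finite set F0, and the congruence class
   of (a0, b0) modulo M meets F0 only in (a0, b0) once M exceeds its spread. *)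
Lemma fourier_exp0_coef (N : nat) (c : fser) : (0 < N)%N ->
  fourier_exp N (fun _ _ => 0) c -> forall a b, c a b = 0.
Proof.
move=> N0 c0 a0 b0.
suff : fourier_term c N 'i 0 (a0, b0) = 0.
  by move/eqP; rewrite mulf_eq0 (negbTE (ee_neq0 _)) orbF => /eqP.
apply: normC_lt_eq0 => eps eps0.
have eps3 : 0 < eps / 3 by rewrite divr_gt0.
have [F0 tail] := has_sum2_tail (c0 'i 0 ltr01) eps3.
have := @isolated_term_small _ _ (a0, b0) F0 _ _ _ (@congr_class_sparse F0 a0 b0) tail eps3
  (@has_sum2_fourier_coset c N _ a0 b0 'i 0 N0 (ltn0Sn _) ltr01 c0).
rewrite /= !subrr !dvdz0 => /(_ isT) small.
by have -> : eps = eps / 3 + eps / 3 + eps / 3 by lra.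
Qed.

Lemma fourier_exp_unique (N : nat) (f g : C -> C -> C) (cf cg : fser) : (0 < N)%N ->
  fourier_exp N f cf -> fourier_exp N g cg ->
  (forall tau z, 0 < complex.Im tau -> f tau z = g tau z) -> forall a b, cf a b = cg a b.
Proof.
move=> N0 hf hg fg a b; apply/eqP; rewrite -subr_eq0; apply/eqP.
apply: (fourier_exp0_coef (c := fun a b => cf a b - cg a b) N0) => tau z tau0.
have := has_sum2D (hf tau z tau0) (has_sum2Zl (-1) (hg tau z tau0)).
rewrite fg // mulN1r subrr; apply: eq_has_sum2 => p; rewrite /fourier_term /=; ring.
Qed.

(** * Heisenberg elements of the Jacobi group *)

(* [heis l] is the element [l, 0] of the Heisenberg group, embedded in P_{2,1}. *)
Definition heisA (l : int) : 'M[int]_2 :=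
  \matrix_(i < 2, j < 2) (if i == j :> nat then 1 else if (i == 1 :> nat) && (j == 0 :> nat) then l else 0).

Definition heisD (l : int) : 'M[int]_2 :=
  \matrix_(i < 2, j < 2) (if i == j :> nat then 1 else if (i == 0 :> nat) && (j == 1 :> nat) then - l else 0).

Definition heis (l : int) : 'M[int]_(2 + 2) := block_mx (heisA l) 0 0 (heisD l).

Lemma heisA_trmx_mulD (l : int) : (heisA l)^T *m heisD l = 1%:M.
Proof.
apply/matrixP => i j; rewrite !mxE !big_ord_recl big_ord0 /= !mxE /=.
by case: i => [[|[|i]]] Hi; case: j => [[|[|j]]] Hj //=; rewrite /bump /=; ring.
Qed.

Lemma heisD_mulN (l : int) : heisD l *m heisD (- l) = 1%:M.
Proof.
apply/matrixP => i j; rewrite !mxE !big_ord_recl big_ord0 /= !mxE /=.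
by case: i => [[|[|i]]] Hi; case: j => [[|[|j]]] Hj //=; rewrite /bump /=; ring.
Qed.

Lemma heis_Sp2Z (l : int) : Sp2Z (heis l).
Proof.
have DtA : (heisD l)^T *m heisA l = 1%:M.
  by rewrite -[LHS]trmxK trmx_mul trmxK heisA_trmx_mulD trmx1.
rewrite /Sp2Z /heis /Jmx tr_block_mx !trmx0 !mulmx_block.
by rewrite !(mulmx0, mul0mx, addr0, add0r, mulmxN, mulmx1, mulNmx, oppr0) heisA_trmx_mulD DtA.
Qed.

Lemma ord4_ind (P : 'I_(2 + 2) -> Prop) :
  (forall k : 'I_2, P (lshift 2 k)) -> (forall k : 'I_2, P (rshift 2 k)) -> forall i, P i.
Proof.
move=> Pl Pr i; case: (splitP i) => k ik.
  by have -> : i = lshift 2 k by apply: val_inj.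
by have -> : i = rshift 2 k by apply: val_inj.
Qed.

Lemma heis_P21 (l : int) : P21 (heis l).
Proof.
have inordL k : (k < 2)%N -> (inord k : 'I_(2 + 2)) = lshift 2 (inord k).
  by move=> k2; apply: val_inj; rewrite /= !inordK // (leq_trans k2).
have inordR k : (k < 2)%N -> (inord (2 + k) : 'I_(2 + 2)) = rshift 2 (inord k).
  by move=> k2; apply: val_inj; rewrite /= !inordK.
rewrite /P21 /heis (inordL 0%N erefl) (inordL 1%N erefl) (inordR 0%N erefl) (inordR 1%N erefl).
by rewrite ?block_mxEul ?block_mxEur ?block_mxEdl ?block_mxEdr !mxE /= ?inordK.
Qed.

Lemma heis_Gamma2 (N : nat) (l : int) : (N%:Z %| l)%Z -> Gamma2 N (heis l).
Proof.
move=> Nl; rewrite /Gamma2 /heis.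
apply: ord4_ind => k1; apply: ord4_ind => k2;
  rewrite ?block_mxEul ?block_mxEur ?block_mxEdl ?block_mxEdr ?mxE -val_eqE /=;
  case: k1 => [[|[|k1]]] H1 //; case: k2 => [[|[|k2]]] H2 //=;
  by rewrite ?subrr ?sub0r ?subr0 ?dvdz0 ?dvdzN // rpredN.
Qed.

Definition period_mx (tau z w : C) : 'M[C]_2 :=
  \matrix_(i < 2, j < 2) (if (i == 0 :> nat) && (j == 0 :> nat) then tau
                          else if (i == 1 :> nat) && (j == 1 :> nat) then w else z).

Lemma period_mxE (tau z w : C) : let X := period_mx tau z w in
  [/\ X ord0 ord0 = tau, X ord0 (inord 1) = z & X (inord 1) (inord 1) = w].
Proof. by split; rewrite !mxE /= ?inordK. Qed.

Lemma sp_act_heis (l : int) (tau z w : C) : let X := sp_act (heis l) (period_mx tau z w) in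
  [/\ X ord0 ord0 = tau, X ord0 (inord 1) = z + l%:~R * tau &
      X (inord 1) (inord 1) = l%:~R * (l%:~R * tau + z) + l%:~R * z + w].
Proof.
have invD : invmx (map_mx (intr : int -> C) (heisD l)) = map_mx intr (heisD (- l)).
  have DD : map_mx (intr : int -> C) (heisD l) *m map_mx intr (heisD (- l)) = 1%:M.
    by rewrite -map_mxM heisD_mulN map_mx1.
  have [Du _] := mulmx1_unit DD.
  by rewrite -[LHS]mulmx1 -DD mulmxA mulVmx // mul1mx.
rewrite /sp_act /blkA /blkB /blkC /blkD /heis block_mxKul block_mxKur block_mxKdl.
rewrite block_mxKdr !map_mx0 mul0mx add0r addr0 invD.
by split; rewrite !mxE !big_ord_recl !big_ord0 !mxE /= ?inordK //=;
  rewrite !big_ord_recl !big_ord0 !mxE /= ?inordK //=; ring.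
Qed.

Lemma sp_j_heis (l : int) (tau z w : C) : sp_j (heis l) (period_mx tau z w) = 1.
Proof.
rewrite /sp_j /blkC /blkD /heis block_mxKdl block_mxKdr map_mx0 mul0mx add0r.
rewrite det_map_mx -det_tr det_trig; first by rewrite !big_ord_recl big_ord0 !mxE /= mulr1.
apply/is_trig_mxP => i j; rewrite !mxE.
by case: i => [[|[|i]]] Hi; case: j => [[|[|j]]] Hj.
Qed.

(* Im w is chosen so that the imaginary part has determinant Im tau. *)
Lemma H2_period_mx (tau z : C) : 0 < complex.Im tau ->
  H2 (period_mx tau z (0 +i* ((complex.Im z) ^+ 2 / complex.Im tau + 1))).
Proof.
move=> T0; split.
  by apply/matrixP => i j; rewrite !mxE; case: i => [[|[|i]]] Hi; case: j => [[|[|j]]] Hj.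
move=> v v0.
rewrite !mxE !big_ord_recl !big_ord0 !mxE /= !big_ord_recl !big_ord0 !mxE /= !addr0.
set T := complex.Im tau; set Y := complex.Im z.
set a := v ord0 ord0; set b := v ord0 (lift ord0 ord0).
have ab : (a != 0) || (b != 0).
  apply: contraT; rewrite negb_or !negbK => /andP [/eqP a0 /eqP b0].
  suff v_eq0 : v = 0 by rewrite v_eq0 eqxx in v0.
  apply/matrixP => i j; rewrite (ord1 i) mxE.
  by case: j => [[|[|j]]] Hj //; [rewrite -a0 | rewrite -b0]; congr (v _ _); apply: val_inj.
have -> : (a * T + b * Y) * a + (a * Y + b * (Y ^+ 2 / T + 1)) * b
        = ((T * a + Y * b) ^+ 2 + T * b ^+ 2) / T by field; rewrite gt_eqF.
apply: divr_gt0 => //; have [b0|b0] := eqVneq b 0.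
  rewrite b0 eqxx orbF in ab.
  by rewrite b0 mulr0 addr0 expr0n mulr0 addr0 exprn_even_gt0 //= mulf_neq0 // lt0r_neq0.
by apply: ltr_pwDr; [rewrite mulr_gt0 // exprn_even_gt0 | exact: sqr_ge0].
Qed.

Lemma jacobi_elliptic_law (N : nat) k2 m chi phi (l : int) :
  jacobi_form N k2 m chi phi -> (N%:Z %| l)%Z ->
  forall tau z : C, 0 < complex.Im tau ->
  phi tau (z + l%:~R * tau) * ee (ratr m * (l%:~R * (l%:~R * tau + z) + l%:~R * z))
   = chi (heis l) * phi tau z.
Proof.
move=> [_ [_ [_ [law _]]]] Nl tau z tau0.
have := law _ (heis_Sp2Z l) (heis_P21 l) (heis_Gamma2 Nl) _ (H2_period_mx z tau0).
rewrite sp_j_heis /autpow sqrtC1 exp1rz mul1r /phi_tilde.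
have [-> -> ->] := sp_act_heis l tau z (0 +i* ((complex.Im z) ^+ 2 / complex.Im tau + 1)).
have [-> -> ->] := period_mxE tau z (0 +i* ((complex.Im z) ^+ 2 / complex.Im tau + 1)).
by rewrite mulrDr eeD !mulrA => /mulIf; apply; exact: ee_neq0.
Qed.

Lemma fourier_exp_elliptic_shift (N : nat) (mu : C) (phi : C -> C -> C) (c : fser)
    (l K1 K2 : int) : (0 < N)%N ->
  K1%:~R = N%:R * mu * l%:~R ^+ 2 -> K2%:~R = 2 * N%:R * mu * l%:~R ->
  fourier_exp N phi c ->
  fourier_exp N (fun tau z => phi tau (z + l%:~R * tau)
                              * ee (mu * (l%:~R * (l%:~R * tau + z) + l%:~R * z)))
                (fun x y => c (x - (y - K2) * l - K1) (y - K2)).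
Proof.
move=> N0 K1E K2E hc tau z tau0.
have NC : (N%:R : C) != 0 by rewrite pnatr_eq0 -lt0n.
pose g (p : int * int) := (p.1 + p.2 * l + K1, p.2 + K2).
pose g' (p : int * int) := (p.1 - (p.2 - K2) * l - K1, p.2 - K2).
have gK : cancel g g' by case=> x y; rewrite /g /g' /=; congr (_, _); ring.
have g'K : cancel g' g by case=> x y; rewrite /g /g' /=; congr (_, _); ring.
have shifted := has_sum2_reindex g'K gK
  (has_sum2Zl (ee (mu * (l%:~R * (l%:~R * tau + z) + l%:~R * z))) (hc tau (z + l%:~R * tau) tau0)).
rewrite [X in has_sum2 _ X]mulrC; apply: eq_has_sum2 shifted => -[x y].
rewrite /fourier_term /=.
rewrite mulrCA -eeD; congr (_ * ee _).
by rewrite !(intrD, intrN, intrM) K1E K2E; field.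
Qed.

Lemma jacobi_coef_shift (N : nat) k2 m chi phi (c : fser) (l K1 K2 a b : int) : (0 < N)%N ->
  jacobi_form N k2 m chi phi -> fourier_exp N phi c -> (N%:Z %| l)%Z ->
  K1%:~R = N%:R * ratr m * l%:~R ^+ 2 :> C -> K2%:~R = 2 * N%:R * ratr m * l%:~R :> C ->
  c a b != 0 -> c (a + b * l + K1) (b + K2) != 0.
Proof.
move=> N0 J hc Nl K1E K2E cab.
have hchi : fourier_exp N (fun tau z => chi (heis l) * phi tau z)
                          (fun x y => chi (heis l) * c x y).
  move=> tau z tau0; apply: eq_has_sum2 (has_sum2Zl (chi (heis l)) (hc tau z tau0)).
  by move=> p; rewrite /fourier_term /= mulrA.
have := fourier_exp_unique N0 (fourier_exp_elliptic_shift N0 K1E K2E hc) hchi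
  (jacobi_elliptic_law J Nl) (a + b * l + K1) (b + K2).
have -> : a + b * l + K1 - (b + K2 - K2) * l - K1 = a by ring.
by rewrite addrK => cE; apply: contraNneq cab => cg0; rewrite cE cg0 mulr0.
Qed.

Lemma bounded_below_shear_eq0 (a a0 b l0 : int) : 0 < l0 ->
  (forall t, a0 <= a + t * l0 * b) -> b = 0.
Proof.
move=> l0_gt0 bnd; apply/eqP; apply: contraT => b0.
have := bnd (- b * (a - a0 + 1)).
have -> : a + - b * (a - a0 + 1) * l0 * b = a - (b * b * l0) * (a - a0 + 1) by ring.
have : 1 <= b * b * l0 by nia.
have := bnd 0; rewrite mul0r mul0r addr0.
nia.
Qed.

(* Take t = -(b div Q): completing the square leaves only the remainder b mod Q. *)
Lemma bounded_below_quadratic_shift (a a0 b l0 Q c0 : int) : 0 < l0 -> 0 < Q ->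
  2 * c0 = l0 * Q -> (forall t, a0 <= a + t * l0 * b + t ^+ 2 * c0) ->
  l0 * b ^+ 2 <= 2 * Q * (a - a0) + l0 * Q ^+ 2.
Proof.
move=> l0_gt0 Q_gt0 c0E bnd.
have := bnd (- (b %/ Q)%Z).
move: (divz_eq b Q) (modz_ge0 b (lt0r_neq0 Q_gt0)) (ltz_pmod b Q_gt0).
move: (b %/ Q)%Z (b %% Q)%Z => s r -> r0 rQ.
set E := a + - s * l0 * (s * Q + r) + (- s) ^+ 2 * c0 => E_ge.
have key : 2 * Q * (E - a0) = 2 * Q * (a - a0) - l0 * ((s * Q + r) ^+ 2 - r ^+ 2)
                              + s ^+ 2 * Q * (2 * c0 - l0 * Q) by rewrite /E; ring.
rewrite c0E subrr mulr0 addr0 in key.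
have : 0 <= 2 * Q * (E - a0) by rewrite !mulr_ge0 ?subr_ge0 // ltW.
have : r ^+ 2 <= Q ^+ 2 by rewrite ler_pXn2r // ?nnegrE // ltW.
move/(ler_wpM2l (ltW l0_gt0)).
lia.
Qed.

(* With m = n/d and l = 2dNt the shifts N m l^2 and 2 N m l are integers. *)
Lemma jacobi_support_shear (N : nat) k2 m chi phi (c : fser) (t a b : int) : (0 < N)%N ->
  jacobi_form N k2 m chi phi -> fourier_exp N phi c -> c a b != 0 ->
  c (a + t * (2 * denq m * N%:Z) * b + t ^+ 2 * (4 * N%:Z ^+ 3 * numq m * denq m))
    (b + t * (4 * N%:Z ^+ 2 * numq m)) != 0.
Proof.
move=> N0 J hc cab.
have NC : (N%:R : C) != 0 by rewrite pnatr_eq0 -lt0n.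
have dC : ((denq m)%:~R : C) != 0 by rewrite intr_eq0 denq_neq0.
have Nl : (N%:Z %| t * (2 * denq m * N%:Z))%Z by do 2 apply: dvdz_mull; exact: dvdzz.
rewrite [t * _ * b]mulrC; apply: jacobi_coef_shift N0 J hc Nl _ _ cab.
- by rewrite /ratr !(intrM, rmorphXn) /=; field.
- by rewrite /ratr !(intrM, rmorphXn) /=; field.
Qed.

Lemma jacobi_fourier_in_RJ (N : nat) k2 m chi phi (c : fser) : (0 < N)%N ->
  jacobi_form N k2 m chi phi -> fourier_exp N phi c -> in_RJ N c.
Proof.
move=> N0 J hc; have [m_ge0 [_ [_ [_ [[c' [hc' [a0 c'_bnd]]] _]]]]] := J.
have bnd a b : c a b != 0 -> a0 <= a.
  by rewrite (fourier_exp_unique N0 hc hc' (fun _ _ _ => erefl)); apply: c'_bnd.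
have shift (t a b : int) (cab : c a b != 0) := bnd _ _ (jacobi_support_shear t N0 J hc cab).
move: shift; set n := numq m; set d := denq m; set l0 := 2 * d * N%:Z => shift.
have l0_gt0 : 0 < l0 by rewrite !mulr_gt0 ?denq_gt0 ?ltz_nat.
have [n0 | n_neq0] := eqVneq n 0.
  apply: (@in_RJ_of_parabolic_support N c 1 1 (- a0) a0) => // a b cab.
  have b0 : b = 0.
    apply: (@bounded_below_shear_eq0 a a0 b l0) => // t.
    by have := shift t a b cab; rewrite n0; lia.
  by have := bnd a b cab; rewrite b0; lia.
set Q := 4 * N%:Z ^+ 2 * n.
have Q_gt0 : 0 < Q.
  by rewrite !mulr_gt0 ?exprn_gt0 ?ltz_nat // lt_neqAle eq_sym n_neq0 /n numq_ge0.
have c0E : 2 * (4 * N%:Z ^+ 3 * n * d) = l0 * Q by rewrite /l0 /Q; ring.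
apply: (@in_RJ_of_parabolic_support N c l0 (2 * Q) (- (2 * Q * a0) + l0 * Q ^+ 2) a0) => //.
  by rewrite mulr_gt0.
move=> a b cab; split; first exact: bnd cab.
have := bounded_below_quadratic_shift l0_gt0 Q_gt0 c0E (fun t => shift t a b cab).
lia.
Qed.

(** * Infinite products *)

Lemma fmul_supp (f g : fser) a b : fmul f g a b != 0 ->
  exists p : int * int, f p.1 p.2 != 0 /\ g (a - p.1) (b - p.2) != 0.
Proof.
apply: contraNP => nsupp; rewrite /fmul fsbig1 // => p _.
apply/eqP; rewrite mulf_eq0; apply: contraT; rewrite negb_or => /andP [fp gp].
by case: nsupp; exists p.
Qed.

Lemma fmul_single (f g : fser) a b :
  (forall p : int * int, p != (a, b) -> f p.1 p.2 * g (a - p.1) (b - p.2) = 0) ->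
  fmul f g a b = f a b * g 0 0.
Proof.
move=> off; rewrite /fmul -(fsbig_widen [set (a, b)]) //; first by rewrite fsbig_set1 /= !subrr.
by move=> p [_ /= pab]; apply: off; apply/eqP => p_ab; exact: pab.
Qed.

Section InfiniteProduct.

Variables (h : hseq) (D : nat).
Hypothesis hD : forall j i r, (0 < j)%N -> h j i r != 0 -> (`|r| <= D)%N.

Lemma hfactor_supp (j : nat) (x y : int) : (0 < j)%N -> hfactor h j x y != 0 ->
  (x = 0 /\ y = 0) \/ (j%:Z <= x /\ (`|y| <= D)%N).
Proof.
move=> j0; rewrite /hfactor /fone /=.
case: (boolP ((x == 0) && (y == 0))) => [/andP [/eqP -> /eqP ->] | nxy]; first by left.
by rewrite add0r; case: ifP => [jx hxy | _]; [right; split => //; exact: hD hxy | rewrite eqxx].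
Qed.

Lemma pprod_supp J a b : pprod h J a b != 0 ->
  [/\ 0 <= a, (`|b| <= D * J)%N & b ^+ 2 <= 2 * D%:Z ^+ 2 * a].
Proof.
elim: J a b => [|J IH] a b /=.
  rewrite /fone; case: (boolP ((a == 0) && (b == 0))) => [/andP [/eqP -> /eqP ->] | _].
    by rewrite expr0n mulr0.
  by rewrite eqxx.
move/fmul_supp => [[a1 b1] [/= /IH [a1_ge0 b1_le b1_sq]]].
have ab_split : a = a1 + (a - a1) /\ b = b1 + (b - b1) by split; ring.
move: (a - a1) (b - b1) ab_split => x y [-> ->] /hfactor_supp [//|[-> ->]|[Jx yD]].
  by rewrite !addr0; split => //; apply: leq_trans b1_le (leq_mul _ _).
rewrite expr2 in b1_sq *.
split; [lia | by rewrite mulnS; lia |].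
have b1_le' : `|b1|%:Z <= D%:Z * J%:Z by lia.
have yD' : `|y|%:Z <= D%:Z by lia.
have b1y : b1 * y <= `|b1|%:Z * `|y|%:Z by nia.
nia.
Qed.

Lemma pprodS_low J a b : a <= J%:Z -> pprod h J.+1 a b = pprod h J a b.
Proof.
move=> aJ; rewrite [LHS]/= fmul_single; first by rewrite /hfactor /fone /= addr0 mulr1.
move=> [a1 b1] ab1 /=.
have [->|p0] := eqVneq (pprod h J a1 b1) 0; first by rewrite mul0r.
have [a1_ge0 _ _] := pprod_supp p0.
apply/eqP; rewrite mulf_eq0; apply/orP; right; rewrite /hfactor /fone /=.
have -> : (a - a1 == 0) && (b - b1 == 0) = false.
  apply/negP => /andP [/eqP a_eq /eqP b_eq]; move/eqP: ab1; apply.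
  by congr (_, _); apply/eqP; rewrite eq_sym -subr_eq0 ?a_eq ?b_eq.
have -> : (J.+1%:Z <= a - a1) = false by apply/negP => Ja; lia.
by rewrite addr0.
Qed.

Lemma is_infprod_pprod_absz : is_infprod h (fun a b => pprod h (absz a) a b).
Proof.
have stab a b k : pprod h (absz a + k) a b = pprod h (absz a) a b.
  by elim: k => [|k IH]; rewrite ?addn0 // addnS pprodS_low //; lia.
by move=> a b; exists (absz a) => J aJ; rewrite -(subnKC aJ) stab.
Qed.

Lemma infprod_in_RJ (N : nat) (P : fser) : (0 < N)%N -> (0 < D)%N -> is_infprod h P -> in_RJ N P.
Proof.
move=> N0 D0 hP.
apply: (@in_RJ_of_parabolic_support N P 1 (2 * D%:Z ^+ 2) 0 0) => // [|a b].
  by rewrite mulr_gt0 // exprn_gt0 // ltz_nat.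
have [J0 PJ] := hP a b; rewrite (PJ J0 (leqnn _)) => /pprod_supp [a_ge0 _].
by rewrite mul1r addr0.
Qed.

End InfiniteProduct.

Lemma admissible_nat_bound (h : hseq) : admissible h ->
  exists D : nat, (0 < D)%N /\ forall j i r, (0 < j)%N -> h j i r != 0 -> (`|r| <= D)%N.
Proof.
move=> [_ [D [D0 hD]]]; exists (Num.bound D).+1; split => // j i r j0 hr.
have : (`|r|%:~R : Rr) < (Num.bound D)%:Z%:~R.
  by rewrite -pmulrn; apply: le_lt_trans (hD j i r j0 hr) (archi_boundP (ltW D0)).
by rewrite ltr_int; lia.
Qed.

Theorem lemma4p6 (N : nat) (HN : (0 < N)%N) :
  (forall f : fser, laurent_poly f -> in_RJ N f) /\
  (forall (k2 : int) (m : rat) (chi : 'M[int]_(2 + 2) -> C) (phi : C -> C -> C),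
     jacobi_form N k2 m chi phi ->
     forall c : fser, fourier_exp N phi c -> in_RJ N c) /\
  (forall h : hseq, admissible h ->
     (exists P : fser, is_infprod h P) /\
     (forall P : fser, is_infprod h P -> in_RJ N P)).
Proof.
split; first by move=> f; apply: laurent_poly_in_RJ.
split; first by move=> k2 m chi phi J c; apply: jacobi_fourier_in_RJ HN J.
move=> h /admissible_nat_bound [D [D0 hD]]; split.
  by exists (fun a b => pprod h (absz a) a b); apply: is_infprod_pprod_absz hD.
by move=> P; apply: (infprod_in_RJ hD HN D0).
Qed.
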